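(* Assume X uses a memory-one strategy $\mathbf p$ that is generous and of Nash type. Assume Y uses a memory-one strategy $\mathbf q$ of Nash type such that either (i) $\mathbf q$ is generous, or (ii) $q_3+q_4>0$. Then $\{cc\}$ is the unique terminal set of the associated Markov matrix $\mathbf M$; in particular $\mathbf M$ has a unique stationary distribution.
   Context: Iterated Prisoner's Dilemma: payoffs $T>R>P>S$ with $2R>T+S$; outcomes of a round are ordered $cc,cd,dc,dd$ (first letter X's play, second Y's; $c$ = cooperate, $d$ = defect); payoff vectors $\mathbf S_X=(R,S,T,P)$, $\mathbf S_Y=(R,T,S,P)$. A memory-one strategy for X is $\mathbf p=(p_1,p_2,p_3,p_4)\in[0,1]^4$, $p_i$ the probability X plays $c$ after the $i$-th outcome. A memory-one strategy for Y is $\mathbf q=(q_1,\dots,q_4)\in[0,1]^4$, with $q_1,q_2,q_3,q_4$ the probabilities Y plays $c$ after outcomes $cc,dc,cd,dd$ respectively. The associated Markov matrix on the states $cc,cd,dc,dd$ has rows $(p_iq'_i,\ p_i(1-q'_i),\ (1-p_i)q'_i,\ (1-p_i)(1-q'_i))$, $i=1,\dots,4$, where $(q'_1,q'_2,q'_3,q'_4)=(q_1,q_3,q_2,q_4)$. A terminal set is a minimal nonempty set of states that no path of positive-probability transitions leaves. A strategy is agreeable if its first entry is $1$, and generous if its second and fourth entries are positive. For a strategy pattern of Y (any rule, possibly history-dependent and random) a limit distribution is a limit point $\mathbf v$ of the Cesàro averages of the round-$n$ outcome distributions, with payoffs $s_X=\langle\mathbf v\cdot\mathbf S_X\rangle$,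 $s_Y=\langle\mathbf v\cdot\mathbf S_Y\rangle$. A strategy for X is of Nash type if it is agreeable and, for every strategy pattern of the opponent and every associated limit distribution, $s_Y\ge R$ implies $s_Y=R$; the same definition is applied to Y's strategy with the roles of X and Y exchanged. *)

From HB Require Import structures.
From mathcomp Require Import all_boot all_order all_algebra.
From mathcomp Require Import reals.
Set Implicit Arguments. Unset Strict Implicit. Unset Printing Implicit Defensive.
Import Order.TTheory GRing.Theory Num.Theory.
Local Open Scope ring_scope.

(* Outcomes of a round, ordered cc, cd, dc, dd (first letter = X's play).
   They are also used as the indices 1..4 of strategy vectors. *)
Definition o_cc : 'I_4 := @Ordinal 4 0 isT.
Definition o_cd : 'I_4 := @Ordinal 4 1 isT.
Definition o_dc : 'I_4 := @Ordinal 4 2 isT.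
Definition o_dd : 'I_4 := @Ordinal 4 3 isT.

Definition x_coop (o : 'I_4) : bool := (val o == 0%N) || (val o == 1%N).
Definition y_coop (o : 'I_4) : bool := (val o == 0%N) || (val o == 2%N).

Section Defs.
Variable R : realType.

Definition is_strategy (s : 'I_4 -> R) := forall i, 0 <= s i <= 1.
Definition agreeable (s : 'I_4 -> R) := s o_cc = 1.
Definition generous (s : 'I_4 -> R) := 0 < s o_cd /\ 0 < s o_dd.

Definition qprime (q : 'I_4 -> R) (i : 'I_4) : R :=
  if i == o_cd then q o_dc else if i == o_dc then q o_cd else q i.

Definition step (a b : R) (o : 'I_4) : R :=
  (if x_coop o then a else 1 - a) * (if y_coop o then b else 1 - b).

Definition markov (p q : 'I_4 -> R) : 'M[R]_4 :=
  \matrix_(i < 4, j < 4) step (p i) (qprime q i) j.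

Definition closed_set (M : 'M[R]_4) (A : {set 'I_4}) :=
  forall i j, i \in A -> 0 < M i j -> j \in A.

Definition terminal_set (M : 'M[R]_4) (A : {set 'I_4}) :=
  [/\ A != set0, closed_set M A &
      forall B : {set 'I_4}, B \subset A -> B != set0 -> closed_set M B -> B = A].

Definition stationary (M : 'M[R]_4) (w : 'I_4 -> R) :=
  [/\ forall i, 0 <= w i, \sum_i w i = 1 & forall j, \sum_i w i * M i j = w j].

(* Strategy patterns: a (behavioural, possibly random, history-dependent) rule
   gives the probability of cooperating as a function of the history of
   previous outcomes (oldest first). *)
Definition is_pattern (f : seq 'I_4 -> R) := forall h, 0 <= f h <= 1.

Fixpoint hprob_from (xs ys : seq 'I_4 -> R) (past fut : seq 'I_4) : R :=
  if fut is o :: f then step (xs past) (ys past) o * hprob_from xs ys (rcons past o) f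
  else 1.

Definition hprob xs ys (h : seq 'I_4) := hprob_from xs ys [::] h.

(* distribution of the outcome of round n.+1 *)
Definition vround xs ys (n : nat) (s : 'I_4) : R :=
  \sum_(t : (n.+1).-tuple 'I_4 | tnth t ord_max == s) hprob xs ys t.

Definition cesaro xs ys (N : nat) (s : 'I_4) : R :=
  (N.+1%:R)^-1 * \sum_(n < N.+1) vround xs ys n s.

Definition limit_distribution xs ys (v : 'I_4 -> R) :=
  forall eps : R, 0 < eps -> forall M : nat,
    exists N : nat, (M <= N)%N /\ forall s, `|cesaro xs ys N s - v s| < eps.

Definition mem1X (c0 : R) (p : 'I_4 -> R) (h : seq 'I_4) : R :=
  if h is o :: _ then p (last o h) else c0.
Definition mem1Y (c0 : R) (q : 'I_4 -> R) (h : seq 'I_4) : R :=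
  if h is o :: _ then qprime q (last o h) else c0.

Definition SX (T Rw P S : R) (o : 'I_4) : R :=
  if o == o_cc then Rw else if o == o_cd then S else if o == o_dc then T else P.
Definition SY (T Rw P S : R) (o : 'I_4) : R :=
  if o == o_cc then Rw else if o == o_cd then T else if o == o_dc then S else P.
Definition payoff (v S : 'I_4 -> R) : R := \sum_o v o * S o.

Definition nash_typeX (T Rw P S : R) (p : 'I_4 -> R) :=
  agreeable p /\
  forall (c0 : R) (ys : seq 'I_4 -> R) (v : 'I_4 -> R),
    0 <= c0 <= 1 -> is_pattern ys -> limit_distribution (mem1X c0 p) ys v ->
    Rw <= payoff v (SY T Rw P S) -> payoff v (SY T Rw P S) = Rw.

Definition nash_typeY (T Rw P S : R) (q : 'I_4 -> R) :=
  agreeable q /\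
  forall (c0 : R) (xs : seq 'I_4 -> R) (v : 'I_4 -> R),
    0 <= c0 <= 1 -> is_pattern xs -> limit_distribution xs (mem1Y c0 q) v ->
    Rw <= payoff v (SX T Rw P S) -> payoff v (SX T Rw P S) = Rw.

End Defs.

From HB Require Import structures.
From mathcomp Require Import all_boot all_order all_algebra.
From mathcomp Require Import reals.
From Stdlib Require Import FunctionalExtensionality.
From mathcomp Require Import lra.
Import Order.TTheory GRing.Theory Num.Theory.
Local Open Scope ring_scope.

(* A Nash-type strategy cannot be exploited forever: if [p_2 = 1], the opponent
   who always defects reaches [cd] in every round and earns [T > R].  Hence
   [p_2 < 1] and, symmetrically, [q_2 < 1].  Together with generosity this makes
   every state of the Markov chain lead to [cc], which both strategies make
   absorbing; an absorbing state reachable from everywhere is the unique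
   terminal set and carries all the mass of every stationary distribution. *)

Lemma ord4P (Q : 'I_4 -> Prop) :
  Q o_cc -> Q o_cd -> Q o_dc -> Q o_dd -> forall o, Q o.
Proof.
move=> Qcc Qcd Qdc Qdd [[|[|[|[|k]]]] lt_k4] //.
- by rewrite (_ : Ordinal lt_k4 = o_cc) //; apply: val_inj.
- by rewrite (_ : Ordinal lt_k4 = o_cd) //; apply: val_inj.
- by rewrite (_ : Ordinal lt_k4 = o_dc) //; apply: val_inj.
- by rewrite (_ : Ordinal lt_k4 = o_dd) //; apply: val_inj.
Qed.

Section PointMass.
Context {R : realType}.

Definition point_mass (a o : 'I_4) : R := (o == a)%:R.

Lemma payoff_point_mass (a : 'I_4) (f : 'I_4 -> R) : payoff (point_mass a) f = f a.
Proof.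
rewrite /payoff (bigD1 a) //= /point_mass eqxx mul1r big1 ?addr0 //.
by move=> o /negbTE ->; rewrite mul0r.
Qed.

Lemma sum_point_mass (a : 'I_4) : \sum_o point_mass a o = 1.
Proof. by rewrite (bigD1 a) //= /point_mass eqxx big1 ?addr0 // => o /negbTE ->. Qed.

Lemma step_ge0 (a b : R) o : 0 <= a <= 1 -> 0 <= b <= 1 -> 0 <= step a b o.
Proof.
move=> /andP[a_ge0 a_le1] /andP[b_ge0 b_le1].
by rewrite /step; apply: mulr_ge0; case: ifP; rewrite ?subr_ge0.
Qed.

Lemma step_gt0 (a b : R) o :
  (if x_coop o then 0 < a else a < 1) -> (if y_coop o then 0 < b else b < 1) ->
  0 < step a b o.
Proof.
by rewrite /step; case: (x_coop o); case: (y_coop o) => *; apply: mulr_gt0; rewrite ?subr_gt0.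
Qed.

Lemma step11 o : step (1 : R) 1 o = point_mass o_cc o.
Proof. by move: o; apply: ord4P; rewrite /step /point_mass /= ?subrr ?mulr1 ?mulr0. Qed.

Lemma step10 o : step (1 : R) 0 o = point_mass o_cd o.
Proof. by move: o; apply: ord4P; rewrite /step /point_mass /= ?subr0 ?subrr ?mulr1 ?mulr0. Qed.

Lemma step01 o : step (0 : R) 1 o = point_mass o_dc o.
Proof. by move: o; apply: ord4P; rewrite /step /point_mass /= ?subr0 ?subrr ?mul1r ?mul0r. Qed.

End PointMass.

Section ConstantPlay.
Variables (R : realType) (xs ys : seq 'I_4 -> R) (a : 'I_4).
Hypothesis play_a :
  forall h, all (pred1 a) h -> step (xs h) (ys h) =1 point_mass a.

Lemma hprob_from_constant (past fut : seq 'I_4) : all (pred1 a) past ->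
  hprob_from xs ys past fut = (all (pred1 a) fut)%:R.
Proof.
elim: fut past => [|o fut IH] past past_a //=.
rewrite play_a // /point_mass; case: (eqVneq o a) => [->|_]; last by rewrite mul0r.
by rewrite mul1r IH // all_rcons /= eqxx.
Qed.

Lemma vround_constant n : vround xs ys n =1 point_mass a.
Proof.
move=> s; rewrite /vround.
under eq_bigr => t _ do rewrite /hprob hprob_from_constant //.
rewrite big_mkcond (bigD1 (nseq_tuple n.+1 a)) //= tnth_nseq eqxx.
have -> : all (pred1 a) (nseq n a) by apply/all_pred1P; rewrite size_nseq.
rewrite big1 ?addr0 => [|t t_neq]; first by rewrite /point_mass eq_sym; case: ifP.
case: ifP => // _; case t_a: (all (pred1 a) t) => //.
move/all_pred1P: t_a => t_a; case/negP: t_neq; apply/eqP/val_inj.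
by rewrite /= t_a size_tuple.
Qed.

Lemma limit_distribution_constant : limit_distribution xs ys (point_mass a).
Proof.
move=> eps eps_gt0 N0; exists N0; split => // s.
suff -> : cesaro xs ys N0 s = point_mass a s by rewrite subrr normr0.
rewrite /cesaro; under eq_bigr => n _ do rewrite vround_constant.
by rewrite sumr_const card_ord -(mulr_natl (point_mass a s)) mulrA mulVf ?mul1r ?pnatr_eq0.
Qed.

End ConstantPlay.

Section NashType.
Context {R : realType} {T Rw P S : R}.
Hypothesis lt_Rw_T : Rw < T.

Lemma mem1X_constant (p : 'I_4 -> R) a h :
  all (pred1 a) h -> mem1X (p a) p h = p a.
Proof.
case: h => [|o h] // h_a /=.
by congr p; apply/eqP; apply: (allP h_a); apply: mem_last.
Qed.

Lemma mem1Y_constant (q : 'I_4 -> R) a h :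
  all (pred1 a) h -> mem1Y (qprime q a) q h = qprime q a.
Proof.
case: h => [|o h] // h_a /=.
by congr qprime; apply/eqP; apply: (allP h_a); apply: mem_last.
Qed.

Lemma nash_typeX_lt1 {p : 'I_4 -> R} :
  is_strategy p -> nash_typeX T Rw P S p -> p o_cd < 1.
Proof.
move=> p_strat [_ nashX]; rewrite lt_neqAle (andP (p_strat o_cd)).2 andbT.
apply/eqP => p_cd1.
have exploit := nashX (p o_cd) (fun=> 0) (point_mass o_cd).
rewrite payoff_point_mass /SY /= in exploit.
have T_eq : T = Rw.
  apply: exploit (ltW lt_Rw_T); first exact: p_strat.
    by move=> h; rewrite lexx ler01.
  apply: limit_distribution_constant => h h_cd.
  by rewrite mem1X_constant // p_cd1; apply: step10.
by move: lt_Rw_T; rewrite T_eq ltxx.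
Qed.

Lemma nash_typeY_lt1 {q : 'I_4 -> R} :
  is_strategy q -> nash_typeY T Rw P S q -> q o_cd < 1.
Proof.
move=> q_strat [_ nashY]; rewrite lt_neqAle (andP (q_strat o_cd)).2 andbT.
apply/eqP => q_cd1.
have exploit := nashY (qprime q o_dc) (fun=> 0) (point_mass o_dc).
rewrite payoff_point_mass /SX /= in exploit.
have T_eq : T = Rw.
  apply: exploit (ltW lt_Rw_T); first exact: q_strat.
    by move=> h; rewrite lexx ler01.
  apply: limit_distribution_constant => h h_dc.
  by rewrite mem1Y_constant // /qprime /= q_cd1; apply: step01.
by move: lt_Rw_T; rewrite T_eq ltxx.
Qed.

End NashType.

Section AbsorbingState.
Variables (R : realType) (M : 'M[R]_4) (a : 'I_4).
Hypothesis M_ge0 : forall i j, 0 <= M i j.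
Hypothesis absorbing : forall j, M a j = point_mass a j.

Inductive reaches : 'I_4 -> Prop :=
| reaches_refl : reaches a
| reaches_step i k : 0 < M i k -> reaches k -> reaches i.

Hypothesis reaches_all : forall i, reaches i.

Lemma closed_set_reaches {A i} : closed_set M A -> i \in A -> reaches i -> a \in A.
Proof.
move=> A_closed i_A reach_i; elim: reach_i i_A => // j k M_gt0 _ IH j_A.
exact: IH (A_closed _ _ j_A M_gt0).
Qed.

Lemma closed_set_absorbing : closed_set M [set a].
Proof.
move=> i j; rewrite inE => /eqP ->.
by rewrite absorbing /point_mass inE; case: (j == a); rewrite ?ltxx.
Qed.

Lemma terminal_set_absorbing A : terminal_set M A <-> A = [set a].
Proof.
have a_ne0 : [set a] != set0 by apply/set0Pn; exists a; rewrite inE.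
split=> [[A_ne0 A_closed A_min] | ->].
  have /set0Pn[i i_A] := A_ne0.
  have a_A : a \in A := closed_set_reaches A_closed i_A (reaches_all i).
  by symmetry; apply: A_min; rewrite ?sub1set //; apply: closed_set_absorbing.
split=> // [|B]; first exact: closed_set_absorbing.
by rewrite subset1 => /orP[/eqP -> | /eqP ->] //; rewrite eqxx.
Qed.

Lemma stationary_point_mass : stationary M (point_mass a).
Proof.
split=> [i | | j]; first exact: ler0n.
  exact: sum_point_mass.
by have := payoff_point_mass a (M^~ j); rewrite /payoff => ->; rewrite absorbing.
Qed.

(* Balance at [j] reads [w j = \sum_i w i * M i j]; if [w j = 0], or if [j = a]
   (where the term [i = a] already accounts for [w a]), every other summand
   vanishes.  Induction on [reaches] propagates [w = 0] backwards from [a]. *)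
Lemma stationary_reaches_eq0 {w} : stationary M w -> forall i, i != a -> w i = 0.
Proof.
move=> [w_ge0 _ balance].
have summand_eq0 j i : \sum_(k | k != j) w k * M k j = 0 -> i != j -> 0 < M i j ->
    w i = 0.
  move=> /psumr_eq0P/(_ i) eq0 i_neq M_gt0; apply/eqP.
  have /eqP := eq0 (fun k _ => mulr_ge0 (w_ge0 k) (M_ge0 k j)) i_neq.
  by rewrite mulf_eq0 (gt_eqF M_gt0) orbF.
have from_a i : i != a -> 0 < M i a -> w i = 0.
  apply: (summand_eq0 a); apply/eqP.
  have := balance a; rewrite (bigD1 a) //= absorbing /point_mass eqxx mulr1.
  by move=> /eqP; rewrite -subr_eq0 addrC addrK.
have from_zero i k : w k = 0 -> 0 < M i k -> w i = 0.
  move=> w_k M_gt0; have [-> // | i_neq] := eqVneq i k.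
  apply: (summand_eq0 k) => //; apply/eqP.
  by have := balance k; rewrite w_k (bigD1 k) //= w_k mul0r add0r => ->.
move=> i; elim: (reaches_all i) => [|j k M_gt0 _ IH]; first by rewrite eqxx.
move=> j_neq; have [k_a | k_neq] := eqVneq k a.
  by move: M_gt0; rewrite k_a; apply: from_a.
exact: from_zero (IH k_neq) M_gt0.
Qed.

Lemma stationary_absorbing w : stationary M w -> w = point_mass a.
Proof.
move=> w_stat; have w_eq0 := stationary_reaches_eq0 w_stat.
apply: functional_extensionality => i; rewrite /point_mass.
have [-> | i_neq] := eqVneq i a; last exact: w_eq0.
case: w_stat => _ + _; rewrite (bigD1 a) //= big1 ?addr0 //.
Qed.

End AbsorbingState.
Arguments reaches {R} M a _.
Arguments reaches_refl {R M a}.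
Arguments reaches_step {R M a i k}.

Section IPDMarkovChain.
Context {R : realType} {p q : 'I_4 -> R}.
Hypotheses (p_strat : is_strategy p) (q_strat : is_strategy q).

Lemma qprime_strategy : is_strategy (qprime q).
Proof. by move=> i; rewrite /qprime; do 2?case: ifP => _; apply: q_strat. Qed.

Lemma markov_ge0 i j : 0 <= markov p q i j.
Proof. by rewrite mxE; apply: step_ge0; [apply: p_strat | apply: qprime_strategy]. Qed.

Lemma markov_gt0 i j :
  (if x_coop j then 0 < p i else p i < 1) ->
  (if y_coop j then 0 < qprime q i else qprime q i < 1) ->
  0 < markov p q i j.
Proof. by rewrite mxE; apply: step_gt0. Qed.

Lemma markov_absorbing_cc :
  agreeable p -> agreeable q -> forall j, markov p q o_cc j = point_mass o_cc j.
Proof. by move=> p_cc q_cc j; rewrite mxE /qprime /= p_cc q_cc step11. Qed.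

Lemma reaches_cc :
  generous p -> p o_cd < 1 -> q o_cd < 1 -> 0 < q o_dc \/ 0 < q o_dd ->
  forall i, reaches (markov p q) o_cc i.
Proof.
move=> [p_cd_gt0 p_dd_gt0] p_cd_lt1 q_cd_lt1 q_dc_dd.
have to_cc i : 0 < p i -> 0 < qprime q i -> reaches (markov p q) o_cc i.
  by move=> p_gt0 q_gt0; apply: (reaches_step (k := o_cc)) _ reaches_refl;
    apply: markov_gt0.
have cd_if : 0 < q o_dc -> reaches (markov p q) o_cc o_cd := to_cc _ p_cd_gt0.
have reach_dd : reaches (markov p q) o_cc o_dd.
  have [q_dd_gt0 | q_dd_le0] := ltrP 0 (q o_dd); first exact: to_cc p_dd_gt0 q_dd_gt0.
  have q_dc_gt0 : 0 < q o_dc by case: q_dc_dd => //; lra.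
  apply: (reaches_step (k := o_cd)) _ (cd_if q_dc_gt0); apply: markov_gt0 => //=.
  by rewrite /qprime /=; lra.
have reach_cd : reaches (markov p q) o_cc o_cd.
  have [q_dc_gt0 | q_dc_le0] := ltrP 0 (q o_dc); first exact: cd_if.
  apply: (reaches_step (k := o_dd)) _ reach_dd; apply: markov_gt0 => //=.
  by rewrite /qprime /=; lra.
have reach_dc : reaches (markov p q) o_cc o_dc.
  have [p_dc_gt0 | p_dc_le0] := ltrP 0 (p o_dc).
    have [q_cd_gt0 | q_cd_le0] := ltrP 0 (q o_cd); first exact: to_cc.
    by apply: (reaches_step (k := o_cd)) _ reach_cd; apply: markov_gt0.
  apply: (reaches_step (k := o_dd)) _ reach_dd; apply: markov_gt0 => //=.
  lra.
by apply: ord4P => //; apply: reaches_refl.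
Qed.

End IPDMarkovChain.

Theorem proposition2p7 (R : realType) (T Rw P S : R)
  (p q : 'I_4 -> R) :
  P < Rw -> Rw < T -> S < P -> T + S < 2 * Rw ->
  is_strategy p -> is_strategy q ->
  generous p -> nash_typeX T Rw P S p ->
  nash_typeY T Rw P S q -> (generous q \/ 0 < q o_dc + q o_dd) ->
  (forall A : {set 'I_4}, terminal_set (markov p q) A <-> A = [set o_cc]) /\
  (exists w, stationary (markov p q) w /\
     forall w', stationary (markov p q) w' -> w' = w).
Proof.
move=> _ lt_Rw_T _ _ p_strat q_strat p_generous nashX nashY q_dc_dd.
have q_dc_or_dd : 0 < q o_dc \/ 0 < q o_dd.
  have [/andP[q_dc_ge0 _] /andP[q_dd_ge0 _]] := (q_strat o_dc, q_strat o_dd).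
  case: q_dc_dd => [[_ q_dd_gt0] | q_sum_gt0]; first by right.
  by have [q_dd_gt0 | q_dd_le0] := ltrP 0 (q o_dd); [right | left; lra].
have reach := reaches_cc p_generous (nash_typeX_lt1 lt_Rw_T p_strat nashX)
  (nash_typeY_lt1 lt_Rw_T q_strat nashY) q_dc_or_dd.
have absorbing := markov_absorbing_cc nashX.1 nashY.1.
have M_ge0 := markov_ge0 p_strat q_strat.
split=> [A | ]; first exact: terminal_set_absorbing absorbing reach A.
exists (point_mass o_cc); split; first exact: stationary_point_mass absorbing.
by move=> w; apply: stationary_absorbing M_ge0 absorbing reach w.
Qed.
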